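(* For any integer $t\geq 3$, there exist a connected graph $G$ and a function $g:V(G_1)\to V(G_2)$ such that $Dist(G)-Dist(F_G)=t$.
   Context: $Dist(H)$ is the least $t$ such that $H$ has a labeling $V(H)\to\{1,\dots,t\}$ preserved by no non-identity automorphism of $H$. Functigraph: for disjoint copies $G_1,G_2$ of a connected graph $G$ and a function $g:V(G_1)\to V(G_2)$, $F_G$ has vertex set $V(G_1)\cup V(G_2)$ and edge set $E(G_1)\cup E(G_2)\cup\{uv: u\in V(G_1),\ g(u)=v\}$. *)

From mathcomp Require Import all_boot all_fingroup.
Set Implicit Arguments. Unset Strict Implicit. Unset Printing Implicit Defensive.

Definition simple_graph (T : finType) (e : rel T) : Prop :=
  irreflexive e /\ symmetric e.

Definition connected_graph (T : finType) (e : rel T) : Prop :=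
  0 < #|T| /\ forall x y : T, connect e x y.

Definition is_aut (T : finType) (e : rel T) (s : {perm T}) : bool :=
  [forall x, forall y, e (s x) (s y) == e x y].

(* a labeling with labels in {1,...,k} (encoded as 'I_k) preserved by no
   non-identity automorphism *)
Definition has_dist_labeling (T : finType) (e : rel T) (k : nat) : bool :=
  [exists f : {ffun T -> 'I_k},
     [forall s : {perm T},
        (is_aut e s && [forall x, f (s x) == f x]) ==> (s == 1%g)]].

Lemma has_dist_labeling_exists (T : finType) (e : rel T) :
  exists k, has_dist_labeling e k.
Proof.
exists #|T|; apply/existsP; exists [ffun x => enum_rank x].
apply/forallP => s; apply/implyP => /andP [_ /forallP H].
apply/eqP/permP => x; rewrite perm1.
by apply: enum_rank_inj; move/eqP: (H x); rewrite !ffunE.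
Qed.

Definition Dist (T : finType) (e : rel T) : nat :=
  ex_minn (has_dist_labeling_exists e).

(* Functigraph F_G on V(G_1) ∪ V(G_2) = T + T (inl = copy G_1, inr = copy G_2) *)
Definition functigraph (T : finType) (e : rel T) (g : T -> T) : rel (T + T) :=
  fun a b =>
    match a, b with
    | inl u, inl v => e u v
    | inr u, inr v => e u v
    | inl u, inr v => g u == v
    | inr v, inl u => g u == v
    end.

From mathcomp Require Import all_boot all_fingroup.
From mathcomp Require Import zify.
Set Implicit Arguments.
Unset Strict Implicit.
Unset Printing Implicit Defensive.

(* Take G = K_{1,2t}; its 2t leaves are pairwise twins, so Dist(G) = 2t. Let g
   send the centre and the leaves 1..t of G_1 to leaf 1 of G_2, and leaf t+i of
   G_1 to leaf i+1 of G_2. In F_G the leaves 1..t of G_1 remain pairwise twins,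
   so Dist(F_G) >= t. Conversely, a t-labelling giving distinct labels to the
   three vertices of degree at least 3 (both centres and leaf 1 of G_2) fixes
   them under any label-preserving automorphism, and every other vertex is then
   fixed because, among the neighbours of some already fixed vertex, it is the
   only one with its label that is not yet known to be fixed. *)

Section Automorphisms.
Variables (T : finType) (e : rel T).

Lemma is_autP (s : {perm T}) : is_aut e s -> forall x y, e (s x) (s y) = e x y.
Proof. by move=> /forallP aut_s x y; apply/eqP; move/forallP: (aut_s x). Qed.

Lemma aut_card_nbhd (s : {perm T}) x : is_aut e s -> #|e (s x)| = #|e x|.
Proof.
move=> /is_autP aut_s; rewrite -(card_image (@perm_inj _ s) (e x)).
apply: eq_card => y; rewrite -[y](permKV s) mem_image; last exact: perm_inj.
by rewrite !unfold_in aut_s.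
Qed.

Lemma aut_nbhd_fixed (s : {perm T}) v x :
  is_aut e s -> s v = v -> e v x -> e v (s x).
Proof. by move=> /is_autP aut_s sv; rewrite -{2}sv aut_s. Qed.

Lemma card_nbhd_ge x (ys : seq T) :
  uniq ys -> all (e x) ys -> size ys <= #|e x|.
Proof.
move=> uniq_ys /allP ys_nbhd; rewrite -(card_uniqP uniq_ys).
by apply: subset_leq_card; apply/subsetP.
Qed.

Lemma card_nbhd_le2 x a b : (forall y, e x y -> y = a \/ y = b) -> #|e x| <= 2.
Proof.
move=> nbhd_ab; apply: leq_trans (card_size [:: a; b]).
apply: subset_leq_card; apply/subsetP => y /nbhd_ab.
by rewrite !inE => -[|] ->; rewrite eqxx ?orbT.
Qed.

Lemma twins_aut x y :
  symmetric e -> (forall z, e x z = e y z) -> is_aut e (tperm x y).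
Proof.
move=> e_sym twin_xy.
have twin_yx z : e z x = e z y by rewrite e_sym twin_xy e_sym.
apply/forallP => a; apply/forallP => b; apply/eqP.
by case: (tpermP x y a) => [->|->|_ _]; case: (tpermP x y b) => [->|->|_ _];
  rewrite ?twin_xy ?twin_yx.
Qed.

Lemma Dist_le k : has_dist_labeling e k -> Dist e <= k.
Proof. by rewrite /Dist; case: ex_minnP => m _; apply. Qed.

Lemma has_dist_labeling_nat k (f : T -> nat) :
    (forall x, f x < k) ->
    (forall s : {perm T}, is_aut e s -> (forall x, f (s x) = f x) -> s = 1%g) ->
  has_dist_labeling e k.
Proof.
move=> f_lt f_dist; apply/existsP; exists [ffun x => Ordinal (f_lt x)].
apply/forallP => s; apply/implyP => /andP[aut_s /forallP s_f].
by apply/eqP/f_dist => // x; move/eqP: (s_f x); rewrite !ffunE => -[].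
Qed.

Lemma twins_le_Dist c (w : 'I_c -> T) :
    symmetric e -> injective w -> (forall a b z, e (w a) z = e (w b) z) ->
  c <= Dist e.
Proof.
move=> e_sym w_inj w_twins.
have /existsP[f /forallP f_dist] : has_dist_labeling e (Dist e).
  by rewrite /Dist; case: ex_minnP.
suff fw_inj : injective (f \o w).
  by rewrite -[c]card_ord -[Dist e]card_ord; apply: leq_card fw_inj.
move=> a b /= fab; apply: w_inj.
have swap_f : [forall z, f (tperm (w a) (w b) z) == f z].
  by apply/forallP => z; case: tpermP => [->|->|_ _]; rewrite ?fab.
move: (f_dist (tperm (w a) (w b))); rewrite twins_aut // swap_f /=.
by move=> /eqP/permP/(_ (w a)); rewrite tpermL perm1.
Qed.

End Automorphisms.

Lemma perm_fixed_by_label (T : finType) (U : eqType) (f : T -> U) (P : pred T)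
    (s : {perm T}) u :
    (forall x, f (s x) = f x) -> (forall x, P x -> P (s x)) -> P u ->
    (forall w, P w -> w != u -> f w = f u -> s w = w) ->
  s u = u.
Proof.
move=> s_f s_P Pu u_unique; case: (eqVneq (s u) u) => // su_u.
exact: perm_inj (u_unique _ (s_P _ Pu) su_u (s_f u)).
Qed.

Lemma eq_mod_window d a x y :
  a <= x < a + d -> a <= y < a + d -> x = y %[mod d] -> x = y.
Proof.
wlog le_xy : x y / x <= y.
  move=> hwlog hx hy xy; case: (leqP x y) => [le|/ltnW le]; first exact: hwlog.
  by apply/esym/hwlog.
move=> hx hy /eqP; rewrite eq_sym eqn_mod_dvd // => /dvdn_leq.
case: posnP => [|_ /(_ isT)]; lia.
Qed.

Lemma functigraph_sym (T : finType) (e : rel T) g :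
  symmetric e -> symmetric (functigraph e g).
Proof. by move=> e_sym [x|x] [y|y] /=. Qed.

Definition star n : rel 'I_n := fun x y => (x == 0 :> nat) != (y == 0 :> nat).
Arguments star : clear implicits.

Lemma star_simple n : simple_graph (star n).
Proof. by split=> [x|x y]; rewrite /star ?eqxx // eq_sym. Qed.

Lemma star_connected n : connected_graph (star n.+1).
Proof.
split=> [|x y]; first by rewrite card_ord.
have center_path z : connect (star n.+1) z ord0 /\ connect (star n.+1) ord0 z.
  case: (posnP z) => [z0|z_gt0].
    by rewrite (_ : z = ord0) ?connect0 //; apply: val_inj.
  by split; apply: connect1; rewrite /star /=; lia.
exact: connect_trans (proj1 (center_path x)) (proj2 (center_path y)).
Qed.

Lemma card_star_nbhd n (x : 'I_n.+1) :
  #|star n.+1 x| = if x == 0 :> nat then n else 1.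
Proof.
case: eqP => x0.
  transitivity #|predC1 (ord0 : 'I_n.+1)|; last by rewrite cardC1 card_ord.
  apply: eq_card => y; rewrite !inE unfold_in /star x0 -val_eqE /=.
  by case: (y == 0 :> nat).
transitivity #|pred1 (ord0 : 'I_n.+1)|; last exact: card1.
apply: eq_card => y; rewrite !inE unfold_in /star -val_eqE /=.
by move/eqP/negPf: x0 => ->; case: (y == 0 :> nat).
Qed.

Lemma Dist_star n : 1 < n -> Dist (star n.+1) = n.
Proof.
move=> n_gt1; apply/anti_leq/andP; split.
  apply: Dist_le; apply: (has_dist_labeling_nat (f := fun x : 'I_n.+1 => x.-1)).
    by move=> x; have := ltn_ord x; lia.
  move=> s aut_s s_f.
  have center_fixed : s ord0 = ord0.
    apply: (perm_fixed_by_label s_f (P := fun x => 1 < #|star n.+1 x|)).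
    - by move=> x; rewrite aut_card_nbhd.
    - by rewrite card_star_nbhd.
    - move=> w; rewrite card_star_nbhd -val_eqE /=.
      by case: eqP => // w0 _; rewrite w0.
  apply/permP => x; rewrite perm1.
  case: (posnP x) => [x0|x_gt0].
    by rewrite (_ : x = ord0) //; apply: val_inj.
  apply: (perm_fixed_by_label s_f (P := star n.+1 ord0)).
  - by move=> y; apply: aut_nbhd_fixed.
  - by rewrite /star /=; lia.
  - by move=> w; rewrite /star -val_eqE /=; lia.
apply: (@twins_le_Dist _ _ _ (fun a : 'I_n => inord a.+1)).
- exact: (star_simple _).2.
- move=> a b /(congr1 (@nat_of_ord _)).
  by rewrite !inordK ?ltnS // => -[] /val_inj.
- by move=> a b z; rewrite /star !inordK ?ltnS.
Qed.

Section MergedStar.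
Variable t : nat.
Hypothesis t_gt2 : 2 < t.

Local Notation V := 'I_(t + t).+1.

Definition merge_leaves (x : V) : V := inord (if x <= t then 1 else x - t + 1).

Local Notation F := (functigraph (star (t + t).+1) merge_leaves).
Local Notation one := (inord 1 : V).

Lemma val_one : one = 1 :> nat.
Proof. by rewrite inordK //; lia. Qed.

Lemma one_le_t : one <= t.
Proof. by rewrite val_one; lia. Qed.

Lemma merge_leaves_cases (x : V) :
     x <= t /\ merge_leaves x = 1 :> nat
  \/ t < x /\ merge_leaves x = x - t + 1 :> nat.
Proof.
have := ltn_ord x; rewrite /merge_leaves.
by case: (leqP x t) => ? ?; rewrite inordK; lia.
Qed.

Lemma merge_leaves_low (x : V) : x <= t -> merge_leaves x = one.
Proof. by move=> x_low; rewrite /merge_leaves x_low. Qed.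

Definition is_hub (x : V + V) : bool :=
  match x with inl i => i == 0 :> nat | inr j => j <= 1 end.

Lemma hub_card_nbhd x : is_hub x -> 2 < #|F x|.
Proof.
case: x => [i|j] /= hub.
  rewrite (_ : i = ord0); last by apply: val_inj => /=; lia.
  apply: (card_nbhd_ge (ys := map inl [:: inord 1; inord 2; inord 3])).
    by rewrite /= !inE !(inj_eq inl_inj) -!val_eqE /= !inordK; lia.
  by rewrite /= /star /= !inordK; lia.
case: (posnP j) => [j0|j_gt0].
  rewrite (_ : j = ord0); last exact: val_inj.
  apply: (card_nbhd_ge (ys := map inr [:: inord 1; inord 2; inord 3])).
    by rewrite /= !inE !(inj_eq inr_inj) -!val_eqE /= !inordK; lia.
  by rewrite /= /star /= !inordK; lia.
rewrite (_ : j = one); last by apply: val_inj => /=; rewrite val_one; lia.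
apply: (card_nbhd_ge (ys := [:: inr ord0; inl ord0; inl one])).
  by rewrite /= !inE (inj_eq inl_inj) -val_eqE /= val_one.
by rewrite /= !merge_leaves_low ?one_le_t // eqxx /star val_one.
Qed.

Lemma nonhub_card_nbhd x : ~~ is_hub x -> #|F x| <= 2.
Proof.
case: x => [i|j] /= nonhub.
  apply: (card_nbhd_le2 (a := inl ord0) (b := inr (merge_leaves i))).
  move=> -[k|k] /=.
    by rewrite /star; left; congr inl; apply: val_inj => /=; lia.
  by move=> /eqP ->; right.
apply: (card_nbhd_le2 (a := inr ord0) (b := inl (inord (j + t - 1)))).
move=> -[u|k] /=.
  move=> /eqP/(congr1 (@nat_of_ord _)) gu; right; congr inl.
  apply: val_inj => /=.
  by move: (merge_leaves_cases u) (ltn_ord u) => ? ?; rewrite inordK; lia.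
by rewrite /star; left; congr inr; apply: val_inj => /=; lia.
Qed.

Lemma is_hubE x : is_hub x = (2 < #|F x|).
Proof.
apply/idP/idP => [/hub_card_nbhd //|]; apply: contraLR => /nonhub_card_nbhd.
by rewrite -leqNgt.
Qed.

(* The hubs get labels 0, 1 and 2, and the labels are injective on each of
   the leaf blocks 1..t and t+1..2t of G_1 and t+2..2t of G_2. *)
Definition merged_label (x : V + V) : nat :=
  match x with inl i => i.-1 | inr j => j.+1 end %% t.

Lemma hub_label_inj x y :
  is_hub x -> is_hub y -> merged_label x = merged_label y -> x = y.
Proof.
rewrite /merged_label.
case: x => [i|j]; case: y => [i'|j'] /= hx hy /(@eq_mod_window t 0) eq_xy.
- by congr inl; apply: val_inj => /=; lia.
- by exfalso; lia.
- by exfalso; lia.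
- by congr inr; apply: val_inj => /=; lia.
Qed.

Section LabelPreservingAutomorphism.
Variable s : {perm V + V}.
Hypothesis aut_s : is_aut F s.
Hypothesis s_label : forall x, merged_label (s x) = merged_label x.

Lemma hub_fixed x : is_hub x -> s x = x.
Proof.
move=> hub_x; apply: (perm_fixed_by_label s_label (P := is_hub)) => //.
  by move=> y; rewrite !is_hubE aut_card_nbhd.
by move=> w hub_w + /(hub_label_inj hub_w hub_x) wx; rewrite wx eqxx.
Qed.

Lemma low_leaf_fixed (i : V) : 0 < i <= t -> s (inl i) = inl i.
Proof.
move=> i_low; apply: (perm_fixed_by_label s_label (P := F (inr one))).
- move=> y; apply: aut_nbhd_fixed => //.
  by apply: hub_fixed; rewrite /= val_one.
- by rewrite /= merge_leaves_low ?eqxx //; case/andP: i_low.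
- move=> [k|k] /=.
  + rewrite -val_eqE /= val_one => k_low /negP k_i /(@eq_mod_window t 0) k_eq_i.
    case: (posnP k) => [k0|k_gt0]; first by apply: hub_fixed => /=; rewrite k0.
    case: k_i; rewrite (inj_eq inl_inj) -val_eqE /=.
    by have := merge_leaves_cases k; have := ltn_ord i; have := ltn_ord k; lia.
  + by rewrite /star val_one => k0 _ _; apply: hub_fixed => /=; lia.
Qed.

Lemma high_leaf_fixed (i : V) : t < i -> s (inl i) = inl i.
Proof.
move=> i_high; apply: (perm_fixed_by_label s_label (P := F (inl ord0))).
- by move=> y; apply: aut_nbhd_fixed; last exact: hub_fixed.
- by rewrite /= /star /=; lia.
- move=> [k|k] /=.
  + rewrite /star /= => k_gt0 /negP k_i.
    case: (leqP k t) => [k_low _|k_high /(@eq_mod_window t t) k_eq_i].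
      by apply: low_leaf_fixed; lia.
    case: k_i; rewrite (inj_eq inl_inj) -val_eqE /=.
    by have := ltn_ord i; have := ltn_ord k; lia.
  + move=> /eqP <- _ _; apply: hub_fixed.
    by rewrite /= merge_leaves_low // val_one.
Qed.

Lemma matched_leaf_fixed (j : V) : 1 < j <= t.+1 -> s (inr j) = inr j.
Proof.
move=> j_mid; pose u : V := inord (j + t - 1).
have u_val : u = j + t - 1 :> nat by rewrite inordK; lia.
have gu : merge_leaves u = j.
  by apply: val_inj => /=; have := merge_leaves_cases u; lia.
apply: (perm_fixed_by_label s_label (P := F (inl u))).
- by move=> y; apply: aut_nbhd_fixed; last by apply: high_leaf_fixed; lia.
- by rewrite /= gu.
- move=> [k|k] /=.
  + by rewrite /star u_val => k0 _ _; apply: hub_fixed => /=; lia.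
  + by rewrite gu => /eqP <-; rewrite eqxx.
Qed.

Lemma free_leaf_fixed (j : V) : t.+1 < j -> s (inr j) = inr j.
Proof.
move=> j_high; apply: (perm_fixed_by_label s_label (P := F (inr ord0))).
- by move=> y; apply: aut_nbhd_fixed; last exact: hub_fixed.
- by rewrite /= /star /=; lia.
- move=> [u|k] /=.
  + by rewrite -val_eqE /= => gu; exfalso; have := merge_leaves_cases u; lia.
  + rewrite /star /= => k_gt0 /negP k_j.
    case: (leqP k 1) => [k_hub _|k_gt1]; first exact: hub_fixed.
    case: (leqP k t.+1) => [k_mid _|k_high /(@eq_mod_window t t.+2) k_eq_j].
      by apply: matched_leaf_fixed; lia.
    case: k_j; rewrite (inj_eq inr_inj) -val_eqE /=.
    by have := ltn_ord j; have := ltn_ord k; lia.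
Qed.

Lemma label_preserving_aut_id : s = 1%g.
Proof.
apply/permP => -[i|j]; rewrite perm1.
  case: (posnP i) => [i0|i_gt0]; first by apply: hub_fixed => /=; rewrite i0.
  case: (leqP i t) => ?; first by apply: low_leaf_fixed; lia.
  exact: high_leaf_fixed.
case: (leqP j 1) => [j_hub|j_gt1]; first exact: hub_fixed.
case: (leqP j t.+1) => ?; first by apply: matched_leaf_fixed; lia.
exact: free_leaf_fixed.
Qed.

End LabelPreservingAutomorphism.

Lemma Dist_merged_functigraph : Dist F = t.
Proof.
apply/anti_leq/andP; split.
  apply: Dist_le; apply: (has_dist_labeling_nat (f := merged_label)).
    by move=> x; rewrite ltn_pmod //; lia.
  exact: label_preserving_aut_id.
apply: (@twins_le_Dist _ _ _ (fun a : 'I_t => inl (inord a.+1))).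
- exact: functigraph_sym (star_simple _).2.
- move=> a b [] /(congr1 (@nat_of_ord _)) ab; apply: val_inj => /=.
  by move: ab (ltn_ord a) (ltn_ord b) => + ? ?; rewrite !inordK; lia.
- move=> a b [k|k] /=; move: (ltn_ord a) (ltn_ord b) => ? ?.
    by rewrite /star !inordK //; lia.
  have low c : c < t -> merge_leaves (inord c.+1) = one.
    by move=> c_lt; apply: merge_leaves_low; rewrite inordK; lia.
  by rewrite !low.
Qed.

End MergedStar.

Theorem lemma2p8 (t : nat) (ht : 3 <= t) :
  exists (n : nat) (e : rel 'I_n) (g : 'I_n -> 'I_n),
    simple_graph e /\ connected_graph e /\
    Dist e = Dist (functigraph e g) + t.
Proof.
exists (t + t).+1, (star (t + t).+1), (merge_leaves (t := t)).
split; first exact: star_simple.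
split; first exact: star_connected.
by rewrite Dist_star ?Dist_merged_functigraph //; lia.
Qed.
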